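(* Let $N\ge 4$ and $M\ge 1$ be integers, let $\mathcal I_N=\{(i,j): i,j\in\{1,\dots,N\},\ i\neq j\}$, and for each dyad $(i,j)\in\mathcal I_N$ let $Y_{ij}\in\{0,1,\dots,M\}$ be an ordered outcome and $X_{ij}\in\mathbb R^k$ a covariate vector. Suppose that, conditional on all covariates $\mathbf X=(X_{ij})_{(i,j)\in\mathcal I_N}$ and all fixed effects $\mathbf F$ (consisting of real numbers $\lambda_{im},\delta_{im}$ for $i=1,\dots,N$, $m=1,\dots,M$), the outcomes $Y_{ij}$ are independent across dyads with \[ P(Y_{ij}=m\mid X_{ij},F_i,F_j)=\begin{cases}1-\Lambda(X_{ij}'\beta_0-\lambda_{i1}-\delta_{j1}), & m=0,\\ \Lambda(X_{ij}'\beta_0-\lambda_{im}-\delta_{jm})-\Lambda(X_{ij}'\beta_0-\lambda_{i,m+1}-\delta_{j,m+1}), & 1\le m\le M-1,\\ \Lambda(X_{ij}'\beta_0-\lambda_{iM}-\delta_{jM}), & m=M,\end{cases} \] where $\Lambda(z)=e^z/(1+e^z)$ and $\beta_0\in\mathbb R^k$. For $m\in\{1,\dots,M\}$ let $D_{ij}(m)=\mathbf 1\{Y_{ij}\ge m\}$. For a tetrad $\sigma=(i_1,i_2,j_1,j_2)$ of four distinct nodes, define \[ \overline Z_\sigma(m)=\tfrac12\Big((D_{i_1j_1}(m)-D_{i_1j_2}(m))-(D_{i_2j_1}(m)-D_{i_2j_2}(m))\Big), \] $X_\sigma=(X_{i_1j_1},X_{i_1j_2},X_{i_2j_1},X_{i_2j_2})$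 and $r_\sigma=(X_{i_1j_1}-X_{i_1j_2})-(X_{i_2j_1}-X_{i_2j_2})$. Then for any tetrad $\sigma$ and any cutoff $m\in\{1,\dots,M\}$, \[ P\big(\overline Z_\sigma(m)=1\mid \overline Z_\sigma(m)\in\{-1,+1\},X_\sigma\big)=\Lambda(r_\sigma'\beta_0). \]
   Context: The thresholds are assumed ordered in the sense that $\lambda_{im'}+\delta_{jm'}\ge \lambda_{im}+\delta_{jm}$ whenever $m'\ge m$, so that the displayed probabilities are valid. $F_i=((\lambda_{im},\delta_{im}):m=1,\dots,M)$ collects the fixed effects of node $i$ (sender effects $\lambda_{im}$ and receiver effects $\delta_{im}$). *)

From HB Require Import structures.
From mathcomp Require Import all_boot all_order all_algebra.
From mathcomp Require Import reals sequences exp.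
Set Implicit Arguments. Unset Strict Implicit. Unset Printing Implicit Defensive.
Import Order.TTheory GRing.Theory Num.Theory.
Local Open Scope ring_scope.

Section Defs.
Variable R : realType.

Definition Lambda (z : R) : R := expR z / (1 + expR z).

Definition dotv (k : nat) (x b : 'rV[R]_k) : R := \sum_(l < k) x 0 l * b 0 l.

Variables (N M k : nat).

(* ordered-logit probability P(Y_ij = m | X_ij, F_i, F_j);
   lam i m, del j m are used for m in {1,...,M} *)
Definition pY (X : 'I_N -> 'I_N -> 'rV[R]_k) (beta : 'rV[R]_k)
  (lam del : 'I_N -> nat -> R) (i j : 'I_N) (m : nat) : R :=
  let G l := Lambda (dotv (X i j) beta - lam i l - del j l) in
  if m == 0%N then 1 - G 1%N
  else if (m < M)%N then G m - G m.+1
  else G M.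

Definition prob (Omega : finType) (P : Omega -> R) (A : pred Omega) : R :=
  \sum_(w | A w) P w.

Definition cprob (Omega : finType) (P : Omega -> R) (A B : pred Omega) : R :=
  prob P (predI A B) / prob P B.

Definition Dind (y : 'I_(M.+1)) (m : nat) : R := ((m <= y)%N)%:R.

Definition Zbar (Y : 'I_N -> 'I_N -> 'I_(M.+1)) (i1 i2 j1 j2 : 'I_N) (m : nat) : R :=
  2^-1 * ((Dind (Y i1 j1) m - Dind (Y i1 j2) m)
          - (Dind (Y i2 j1) m - Dind (Y i2 j2) m)).

End Defs.

(* Independence across dyads turns the probabilities of the events
   {Zbar = 1} and {Zbar = -1} into products of four cutoff probabilities
   P(Y_ij >= m) = Lambda(X_ij' beta0 - lam_im - del_jm) and their complements.
   Since 1 - Lambda z = Lambda z / e^z, the odds of {Zbar = 1} against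
   {Zbar = -1} equal exp of the tetrad difference of the indices, in which every
   fixed effect lam_i1m, lam_i2m, del_j1m, del_j2m cancels; what remains is
   exp(r_sigma' beta0). *)
From HB Require Import structures.
From mathcomp Require Import all_boot all_order all_algebra.
From mathcomp Require Import reals sequences exp.
From mathcomp Require Import ring lra.
Import Order.TTheory GRing.Theory Num.Theory.
Local Open Scope ring_scope.

Set Implicit Arguments. Unset Strict Implicit. Unset Printing Implicit Defensive.

Lemma eq_prob (R : realType) (Omega : finType) (P : Omega -> R) (A B : pred Omega) :
  A =1 B -> prob P A = prob P B.
Proof. exact: eq_bigl. Qed.

Section OrderedLogitTails.
Variables (R : realType) (N M k : nat) (X : 'I_N -> 'I_N -> 'rV[R]_k)
  (beta : 'rV[R]_k) (lam del : 'I_N -> nat -> R).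

Definition pY_ge (i j : 'I_N) (l : nat) : R :=
  Lambda (dotv (X i j) beta - lam i l - del j l).

Lemma sum_pY_ge (i j : 'I_N) (m : nat) : (1 <= m)%N -> (m <= M)%N ->
  \sum_(v < M.+1 | (m <= v)%N) pY M X beta lam del i j v = pY_ge i j m.
Proof.
move=> m_gt0 m_le_M.
rewrite (eq_bigl (fun v : 'I_M.+1 => xpredT v && (m <= v)%N)) //.
rewrite -(big_geq_mkord m M.+1 xpredT (pY M X beta lam del i j)).
(* pY at v is the increment H v.+1 - H v of H l := - pY_ge l for l <= M, 0 beyond M *)
pose H l := if (l <= M)%N then - pY_ge i j l else 0.
rewrite (@telescope_sumr_eq _ m M.+1 H _ (leqW m_le_M)).
  by rewrite /H ltnn m_le_M sub0r opprK.
move=> v /andP[m_le_v]; rewrite ltnS => v_le_M.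
rewrite /pY /H /pY_ge (gtn_eqF (leq_trans m_gt0 m_le_v)) v_le_M /=.
case: (ltnP v M) => [v_lt_M | M_le_v]; first by rewrite opprK addrC.
have -> : v = M by apply/eqP; rewrite eqn_leq v_le_M M_le_v.
by rewrite sub0r opprK.
Qed.

Lemma sum_pY (i j : 'I_N) : (1 <= M)%N -> \sum_(v < M.+1) pY M X beta lam del i j v = 1.
Proof.
move=> M_gt0; rewrite (bigD1 ord0) //=.
rewrite (eq_bigl (fun v : 'I_M.+1 => (1 <= v)%N)) => [|v]; last by rewrite -lt0n.
by rewrite sum_pY_ge // /pY eqxx subrK.
Qed.

Lemma sum_pY_lt (i j : 'I_N) (m : nat) : (1 <= m)%N -> (m <= M)%N ->
  \sum_(v < M.+1 | (v < m)%N) pY M X beta lam del i j v = 1 - pY_ge i j m.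
Proof.
move=> m_gt0 m_le_M; rewrite -(sum_pY i j (leq_trans m_gt0 m_le_M)).
rewrite [in RHS](bigID (fun v : 'I_M.+1 => (m <= v)%N)) /= sum_pY_ge // addrAC subrr add0r.
by apply: eq_bigl => v; rewrite ltnNge.
Qed.

End OrderedLogitTails.

Section DyadIndependence.
Variables (R : realType) (N : nat) (V : finType) (v0 : V) (q : 'I_N -> 'I_N -> V -> R)
  (Omega : finType) (P : Omega -> R) (Y : Omega -> 'I_N -> 'I_N -> V).
Hypothesis hY : forall y : 'I_N -> 'I_N -> V,
  prob P (fun w => [forall i, forall j, (i != j) ==> (Y w i j == y i j)])
  = \prod_(i < N) \prod_(j < N | j != i) q i j (y i j).

Definition offdiag (p : 'I_N * 'I_N) : bool := p.1 != p.2.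

(* The diagonal of Y is not constrained by hY; it is replaced by the dummy v0. *)
Definition dyad_cfg (w : Omega) : {ffun 'I_N * 'I_N -> V} :=
  [ffun p => if offdiag p then Y w p.1 p.2 else v0].

Lemma in_pfamily_offdiag (S : 'I_N * 'I_N -> pred V) (f : {ffun 'I_N * 'I_N -> V}) :
  reflect (forall p, if offdiag p then S p (f p) else f p == v0)
          (f \in pfamily v0 offdiag S).
Proof.
by apply: (iffP familyP) => Sf p; have := Sf p; rewrite /in_mem /= /offdiag; case: ifP.
Qed.

Lemma prob_offdiag_event (S : 'I_N * 'I_N -> pred V) :
  prob P (fun w => [forall p, offdiag p ==> S p (Y w p.1 p.2)])
  = \prod_(p | offdiag p) \sum_(v | S p v) q p.1 p.2 v.
Proof.
rewrite (big_distr_big_dep v0) /= /prob.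
rewrite (partition_big dyad_cfg (mem (pfamily v0 offdiag S))) => [|w /forallP Sw]; last first.
  apply/in_pfamily_offdiag => p; rewrite ffunE.
  by case: ifP => // p_off; have := Sw p; rewrite p_off.
apply: eq_bigr => f /in_pfamily_offdiag Sf.
have -> : \prod_(p | offdiag p) q p.1 p.2 (f p)
        = \prod_(i < N) \prod_(j < N | j != i) q i j (f (i, j)).
  by rewrite pair_big_dep; apply: eq_big => -[i j] //=; rewrite /offdiag eq_sym.
rewrite -hY; apply: eq_bigl => w; apply/andP/forallP => [[_ /eqP <-] i | Yf].
  by apply/forallP => j; apply/implyP => ij; rewrite ffunE /offdiag /= ij.
have cfg_f : dyad_cfg w = f.
  apply/ffunP => -[i j]; rewrite ffunE; have := Sf (i, j); rewrite /offdiag /=.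
  case: ifP => [ij _ | _ /eqP //].
  by have /forallP/(_ j)/implyP/(_ ij)/eqP := Yf i.
split; last by rewrite cfg_f.
by apply/forallP => p; apply/implyP => p_off; have := Sf p; rewrite p_off -cfg_f ffunE p_off.
Qed.

Hypothesis q_sum1 : forall i j, i != j -> \sum_v q i j v = 1.

Variables (i1 i2 j1 j2 : 'I_N).
Hypotheses (i12 : i1 != i2) (j12 : j1 != j2).
Hypotheses (ij11 : i1 != j1) (ij12 : i1 != j2) (ij21 : i2 != j1) (ij22 : i2 != j2).

Definition tetrad_pred (a b c d : pred V) (p : 'I_N * 'I_N) : pred V :=
  if p == (i1, j1) then a else if p == (i1, j2) then b
  else if p == (i2, j1) then c else if p == (i2, j2) then d else predT.

Let i21 : i2 != i1. Proof. by rewrite eq_sym. Qed.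
Let j21 : j2 != j1. Proof. by rewrite eq_sym. Qed.
Let tetrad_simp := (ij11, ij12, ij21, ij22, xpair_eqE, eqxx,
  negbTE i12, negbTE j12, negbTE i21, negbTE j21).

Lemma forall_tetrad_pred (a b c d : pred V) (y : 'I_N -> 'I_N -> V) :
  [forall p, offdiag p ==> tetrad_pred a b c d p (y p.1 p.2)]
  = [&& a (y i1 j1), b (y i1 j2), c (y i2 j1) & d (y i2 j2)].
Proof.
apply/forallP/and4P => [Hy | [ya yb yc yd] [i j]]; last first.
  apply/implyP => _; rewrite /tetrad_pred.
  by do 4![case: eqP => [[-> ->] // | _]].
rewrite /offdiag /tetrad_pred in Hy.
have := Hy (i1, j1); have := Hy (i1, j2); have := Hy (i2, j1); have := Hy (i2, j2).
by rewrite /= ?tetrad_simp /= => -> -> -> ->.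
Qed.

Lemma prob_tetrad (a b c d : pred V) :
  prob P (fun w => [&& a (Y w i1 j1), b (Y w i1 j2), c (Y w i2 j1) & d (Y w i2 j2)])
  = (\sum_(v | a v) q i1 j1 v) * (\sum_(v | b v) q i1 j2 v)
    * (\sum_(v | c v) q i2 j1 v) * (\sum_(v | d v) q i2 j2 v).
Proof.
rewrite -(eq_prob P (fun w => forall_tetrad_pred a b c d (Y w))) prob_offdiag_event.
rewrite (bigD1 (i1, j1)) ?tetrad_simp // (bigD1 (i1, j2)) /offdiag /= ?tetrad_simp //.
rewrite (bigD1 (i2, j1)) /= ?tetrad_simp // (bigD1 (i2, j2)) /= ?tetrad_simp //.
rewrite [X in _ * (_ * (_ * (_ * X)))]big1; last first.
  move=> [i j] /andP[/andP[/andP[/andP[ij n11] n12] n21] n22].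
  by rewrite /tetrad_pred (negbTE n11) (negbTE n12) (negbTE n21) (negbTE n22) q_sum1.
by rewrite /tetrad_pred ?tetrad_simp /= mulr1 !mulrA.
Qed.

End DyadIndependence.

Lemma cprob_orb_disjoint (R : realType) (Omega : finType) (P : Omega -> R) (A B : pred Omega) :
  (forall w, A w -> B w = false) ->
  cprob P A (fun w => A w || B w) = prob P A / (prob P A + prob P B).
Proof.
move=> AnB; rewrite /cprob /prob [in X in _ / X](bigID A) /=.
congr (_ / (_ + _)); apply: eq_bigl => w /=.
- by apply: andb_idr => ->.
- by apply: andb_idl => ->.
- by case: (boolP (A w)) => [/AnB -> | _] /=; rewrite ?andbT.
Qed.

Lemma Zbar_eq1 (R : realType) (N M : nat) (y : 'I_N -> 'I_N -> 'I_M.+1) i1 i2 j1 j2 m :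
  (Zbar R y i1 i2 j1 j2 m == 1) =
  [&& (m <= y i1 j1)%N, (y i1 j2 < m)%N, (y i2 j1 < m)%N & (m <= y i2 j2)%N].
Proof.
rewrite /Zbar /Dind !ltnNge.
case: (m <= _)%N; case: (m <= _)%N; case: (m <= _)%N; case: (m <= _)%N => /=;
  by apply/eqP; lra.
Qed.

Lemma Zbar_eqN1 (R : realType) (N M : nat) (y : 'I_N -> 'I_N -> 'I_M.+1) i1 i2 j1 j2 m :
  (Zbar R y i1 i2 j1 j2 m == -1) =
  [&& (y i1 j1 < m)%N, (m <= y i1 j2)%N, (m <= y i2 j1)%N & (y i2 j2 < m)%N].
Proof.
rewrite /Zbar /Dind !ltnNge.
case: (m <= _)%N; case: (m <= _)%N; case: (m <= _)%N; case: (m <= _)%N => /=;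
  by apply/eqP; lra.
Qed.

Lemma dotvB (R : realType) (k : nat) (x y b : 'rV[R]_k) :
  dotv (x - y) b = dotv x b - dotv y b.
Proof. by rewrite /dotv -sumrB; apply: eq_bigr => l _; rewrite !mxE mulrBl. Qed.

Lemma Lambda_tetrad (R : realType) (a b c d : R) :
  let p_plus := Lambda a * (1 - Lambda b) * (1 - Lambda c) * Lambda d in
  let p_minus := (1 - Lambda a) * Lambda b * Lambda c * (1 - Lambda d) in
  p_plus / (p_plus + p_minus) = Lambda (a - b - (c - d)).
Proof.
rewrite /Lambda !(expRD, expRN).
have := expR_gt0 a; have := expR_gt0 b; have := expR_gt0 c; have := expR_gt0 d.
move: (expR a) (expR b) (expR c) (expR d) => ea eb ec ed ed_gt0 ec_gt0 eb_gt0 ea_gt0.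
have den_gt0 : 0 < eb * ec + ea * ed by rewrite addr_gt0 // mulr_gt0.
by field; rewrite !lt0r_neq0 //; lra.
Qed.

Unset Implicit Arguments.

Theorem theorem1 (R : realType) (N M k : nat) (hN : (4 <= N)%N) (hM : (1 <= M)%N)
  (X : 'I_N -> 'I_N -> 'rV[R]_k) (beta0 : 'rV[R]_k)
  (lam del : 'I_N -> nat -> R)
  (hord : forall (i j : 'I_N) (m m' : nat), (1 <= m)%N -> (m <= m')%N -> (m' <= M)%N ->
     lam i m + del j m <= lam i m' + del j m')
  (Omega : finType) (P : Omega -> R)
  (hP0 : forall w, 0 <= P w) (hP1 : \sum_w P w = 1)
  (Y : Omega -> 'I_N -> 'I_N -> 'I_(M.+1))
  (hY : forall y : 'I_N -> 'I_N -> 'I_(M.+1),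
     prob P (fun w => [forall i, forall j, (i != j) ==> (Y w i j == y i j)])
     = \prod_(i < N) \prod_(j < N | j != i) pY M X beta0 lam del i j (y i j))
  (i1 i2 j1 j2 : 'I_N)
  (hdist : [&& i1 != i2, i1 != j1, i1 != j2, i2 != j1, i2 != j2 & j1 != j2])
  (m : nat) (hm1 : (1 <= m)%N) (hmM : (m <= M)%N) :
  cprob P (fun w => Zbar R (Y w) i1 i2 j1 j2 m == 1)
          (fun w => (Zbar R (Y w) i1 i2 j1 j2 m == 1) || (Zbar R (Y w) i1 i2 j1 j2 m == -1))
  = Lambda (dotv ((X i1 j1 - X i1 j2) - (X i2 j1 - X i2 j2)) beta0).
Proof.
case/and5P: hdist => i12 ij11 ij12 ij21 /andP[ij22 j12].
have q_sum1 i j (_ : i != j) := sum_pY X beta0 lam del i j hM.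
have prob_tetradY := prob_tetrad ord0 hY q_sum1 i12 j12 ij11 ij12 ij21 ij22.
rewrite cprob_orb_disjoint => [|w /eqP ->]; last by apply/eqP; lra.
rewrite (eq_prob P (fun w => Zbar_eq1 R (Y w) i1 i2 j1 j2 m)).
rewrite (eq_prob P (fun w => Zbar_eqN1 R (Y w) i1 i2 j1 j2 m)).
pose ge_m (v : 'I_M.+1) := (m <= v)%N; pose lt_m (v : 'I_M.+1) := (v < m)%N.
rewrite (prob_tetradY ge_m lt_m lt_m ge_m) (prob_tetradY lt_m ge_m ge_m lt_m) /ge_m /lt_m.
rewrite !sum_pY_ge // !sum_pY_lt // Lambda_tetrad.
by congr Lambda; rewrite !dotvB; ring.
Qed.
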